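(* Let $$\mathcal L^H=\sum_{k,\alpha}\rho^\alpha_k\Big\langle\mathcal O^{(k)}_\alpha\exp\Big(\sum_{m,\beta}\lambda^\beta_m\mathcal O^{(m)}_\beta\Big)\Big\rangle_0\in\mathbb C[[\partial_z^m\lambda^\alpha_k,\partial_z^m\rho^\alpha_k]].$$ Then $\oint_C\mathscr J^{(1)}_{\mathcal L^H}$ satisfies the Maurer--Cartan equation in $(\mathrm{Obs}^{\oint_C},\delta,\{-,-\}_C)$: $$\delta\oint_C\mathscr J^{(1)}_{\mathcal L^H}+\tfrac12\Big\{\oint_C\mathscr J^{(1)}_{\mathcal L^H},\oint_C\mathscr J^{(1)}_{\mathcal L^H}\Big\}_C=0.$$
   Context: Genus zero data: $H$ finite-dimensional purely even complex vector space with basis $\{\mathcal O_\alpha\}$, distinguished $P=\mathcal O_1$, $\mathcal O^{(k)}_\alpha=t^k\mathcal O_\alpha$; symmetric multilinear genus zero correlators $\langle\mathcal O^{(k_1)}_{\alpha_1}\cdots\mathcal O^{(k_n)}_{\alpha_n}\rangle_0\in\mathbb C$ vanishing for $n<3$, with $g_{\alpha\beta}=\langle\mathcal O_\alpha\mathcal O_\beta P\rangle_0$ nondegenerate (inverse $g^{\alpha\beta}$, used to raise indices), satisfying the genus zero topological recursion relation $\langle\langle\mathcal O^{(i+1)}_\alpha\mathcal O^{(j)}_\beta\mathcal O^{(k)}_\gamma\rangle\rangle_0=\sum_\sigma\langle\langle\mathcal O^{(i)}_\alpha\mathcal O^{(0)\sigma}\rangle\rangle_0\langle\langle\mathcal O^{(0)}_\sigma\mathcal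 O^{(j)}_\beta\mathcal O^{(k)}_\gamma\rangle\rangle_0$, where $\langle\langle\cdots\rangle\rangle_0(\mathbf b)=\langle\cdots e^{\sum b^\alpha_k\mathcal O^{(k)}_\alpha}\rangle_0$. In $\mathcal L^H$ the exponential is expanded and the correlator applied multilinearly, producing a formal power series in the symbols. Setting on $\mathbb C^\times=\mathbb C/(z\sim z+1)$ with form $dz$: fields $\mathcal E^H=(\mathrm{PV}(\mathbb C^\times)\otimes H)[[t]]$, $\mu=\sum(\lambda^\alpha_k\otimes\mathcal O_\alpha t^k+\rho^\alpha_k\partial_z\otimes\mathcal O_\alpha t^k)$, $\lambda^\alpha_k,\rho^\alpha_k\in\Omega^{0,\bullet}(\mathbb C^\times)$, $t$ of degree 2, $\mathrm{PV}^{i,j}$ in degree $i+j$. Trace $\mathrm{Tr}(\mu)=\int(\mu\vdash dz)\wedge dz$; BV kernel $K_0=\sum_\alpha(\mathcal O^\alpha\otimes\mathcal O_\alpha)\partial_z\delta(z-w)(d\bar z-d\bar w)$. $\mathbb C[[\partial_z^m\lambda^\alpha_k,\partial_z^m\rho^\alpha_k]]$: formal power series in even $\partial_z^m\lambda^\alpha_k$ and odd $\partial_z^m\rho^\alpha_k$, with derivation $\partial_z$; differential $\delta$: odd derivation commuting with $\partial_z$, $\delta\lambda^\alpha_k=\partial_z\rho^\alpha_{k-1}$ ($k\ge1$), $\delta\lambda^\alpha_0=0$, $\delta\rho^\alpha_k=0$. $\mathscr J_{\mathcal L}=dz\,\mathcal L(\partial_z^m\lambda^\alpha_k,\partial_z^m\rho^\alpha_k)$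 (an $\Omega^{\bullet,\bullet}(\mathbb C^\times)$-valued function on fields), with 1-form and 2-form parts $\mathscr J^{(1)}_{\mathcal L},\mathscr J^{(2)}_{\mathcal L}$; $C=\{z\in[0,1]\}$. $\mathrm{Obs}^{\oint_C}=\{\oint_C\mathscr J^{(1)}_{\mathcal L}\}$ with differential $\oint_C\mathscr J^{(1)}_{\mathcal L}\mapsto\oint_C\mathscr J^{(1)}_{\delta\mathcal L}$ and bracket $\{\oint_C\mathscr J^{(1)}_{\mathcal L_1},\oint_C\mathscr J^{(1)}_{\mathcal L_2}\}_C:=\{\int_{\mathbb C^\times}\mathscr J^{(2)}_{\mathcal L_1},\oint_C\mathscr J^{(1)}_{\mathcal L_2}\}_{BV}$, where $\{S,\mathcal O\}_{BV}$ is the derivative of the observable $\mathcal O$ along the field transformation obtained by contracting $K_0$ with the functional derivative of the local functional $S$; concretely $\{\oint_C\mathscr J^{(1)}_{\mathcal L_1},\oint_C\mathscr J^{(1)}_{\mathcal L_2}\}_C=\oint_C\mathscr J^{(1)}_{[\mathcal L_1,\mathcal L_2]}$ with $[\mathcal L_1,\mathcal L_2]=\sum_{\alpha,\beta,k,m}\{(-\partial_z)^k\frac{\partial\mathcal L_1}{\partial(\partial_z^k\lambda^\alpha_0)}\}g^{\alpha\beta}\partial_z\{(-\partial_z)^m\frac{\partial\mathcal L_2}{\partial(\partial_z^m\lambda^\beta_0)}\}$. *)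

From HB Require Import structures.
From mathcomp Require Import all_boot all_algebra complex reals.
Set Implicit Arguments. Unset Strict Implicit. Unset Printing Implicit Defensive.
Import GRing.Theory.
Local Open Scope ring_scope.

(* Basis of H: O_alpha, alpha : 'I_n.+1 ; the distinguished P = O_1 is the  *)
(* basis vector with index ord0.  An insertion O^{(k)}_alpha = t^k O_alpha  *)
(* is the pair (alpha, k).                                                  *)
Definition ins (n : nat) := ('I_n.+1 * nat)%type.

(* The symbol d_z^m lambda^alpha_k (resp. d_z^m rho^alpha_k) is the triple
   ((alpha, k), m); the even variables are the lambda's, the odd ones the
   rho's (both indexed by fvar n). *)
Definition fvar (n : nat) := (ins n * nat)%type.

(* Formal power series over K in (countably many) even variables of type E  *)
(* and odd variables of type O, represented by their Taylor coefficients:   *)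
(*   F  <->  sum_{p,q} 1/(p! q!) sum_{es,os} F es os . e_1..e_p o_1..o_q,    *)
(* i.e. F es os = (d_{e_1}..d_{e_p} d_{o_1}..d_{o_q} F)(0), left derivatives.*)
Definition sps (K : Type) (E O : Type) := seq E -> seq O -> K.

Definition sps_wf (K : ringType) (E O : eqType) (F : sps K E O) : Prop :=
  (forall es es' os, perm_eq es es' -> F es os = F es' os) /\
  (forall es pre o1 o2 post,
      F es (pre ++ o1 :: o2 :: post) = - F es (pre ++ o2 :: o1 :: post)).

Section SuperSeries.
Variables (K : ringType) (E O : Type).

Definition sps_add (F G : sps K E O) : sps K E O := fun es os => F es os + G es os.
Definition sps_scale (c : K) (F : sps K E O) : sps K E O := fun es os => c * F es os.

(* number of pairs i < j with b_i = false, b_j = true: the number of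
   transpositions needed to move the selected odd variables to the front *)
Fixpoint inv_count (b : seq bool) : nat :=
  match b with
  | [::] => 0
  | x :: b' => (if x then 0 else count id b') + inv_count b'
  end.

(* super-commutative product (Leibniz rule on Taylor coefficients) *)
Definition sps_mul (F G : sps K E O) : sps K E O := fun es os =>
  \sum_(a : (size es).-tuple bool) \sum_(b : (size os).-tuple bool)
    (-1) ^+ inv_count b * F (mask a es) (mask b os)
                        * G (mask (map negb a) es) (mask (map negb b) os).

Definition sps_dE (v : E) (F : sps K E O) : sps K E O := fun es os => F (v :: es) os.
Definition sps_dO (v : O) (F : sps K E O) : sps K E O := fun es os => F es (v :: os).
End SuperSeries.

Definition FPS (R : realType) (n : nat) := sps R[i] (fvar n) (fvar n).

Fixpoint unshifts (n : nat) (s : seq (fvar n)) : seq (seq (fvar n)) :=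
  match s with
  | [::] => [::]
  | x :: s' =>
      (if x.2 is m.+1 then [:: (x.1, m) :: s'] else [::])
        ++ map (cons x) (unshifts s')
  end.

(* the (even) derivation d_z : d_z^m v |-> d_z^{m+1} v on all variables.
   Taylor coefficients: d_{y_1}..d_{y_p}(d_z F)(0) = sum_i d_{y_1}..
   d_{unshift y_i}..d_{y_p} F (0). *)
Definition dz (R : realType) (n : nat) (F : FPS R n) : FPS R n := fun es os =>
  \sum_(es' <- unshifts es) F es' os + \sum_(os' <- unshifts os) F es os'.

Definition rem_at (T : Type) (i : nat) (s : seq T) := take i s ++ drop i.+1 s.

(* the odd derivation delta, commuting with d_z, with
   delta lambda^alpha_k = d_z rho^alpha_{k-1} (k >= 1), delta lambda^alpha_0 = 0,
   delta rho = 0; hence delta (d_z^m lambda^alpha_{k+1}) = d_z^{m+1} rho^alpha_k,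
   i.e. delta = sum_v delta(v) . d/dv (v even). *)
Definition deltaS (R : realType) (n : nat) (F : FPS R n) : FPS R n := fun es os =>
  \sum_(i < size os)
    (-1) ^+ i * (match nth ((ord0, 0%N), 0%N) os i with
                 | ((a, k), m.+1) => F (((a, k.+1), m) :: es) (rem_at i os)
                 | _ => 0
                 end).

Definition weight (n : nat) (es os : seq (fvar n)) : nat :=
  sumn (map snd es) + sumn (map snd os).

(* Euler-Lagrange derivative  sum_k (-d_z)^k dF/d(d_z^k lambda^alpha_0).
   The coefficient of this infinite sum at (es, os) only receives
   contributions from k <= weight es os (as d_z^k G has vanishing
   coefficients at monomials of weight < k), so the sum is finite. *)
Definition EL (R : realType) (n : nat) (alpha : 'I_n.+1) (F : FPS R n) : FPS R n :=
  fun es os =>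
    \sum_(k < (weight es os).+1)
      (-1) ^+ k * iter k (@dz R n) (sps_dE ((alpha, 0%N), (k : nat)) F) es os.

Definition correlator (R : realType) (n : nat) := seq (ins n) -> R[i].

Definition gmet (R : realType) (n : nat) (corr : correlator R n) : 'M[R[i]]_n.+1 :=
  \matrix_(a, b) corr [:: (a, 0%N); (b, 0%N); (ord0, 0%N)].

Definition ginv (R : realType) (n : nat) (corr : correlator R n) : 'M[R[i]]_n.+1 :=
  invmx (gmet corr).

(* << X >>_0 (b) = < X exp(sum b^beta_m O^{(m)}_beta) >_0, a formal power
   series in the even variables b^beta_m (indexed by ins n), no odd ones;
   its Taylor coefficient at (beta_1,m_1)..(beta_p,m_p) is
   < X O^{(m_1)}_{beta_1} .. O^{(m_p)}_{beta_p} >_0. *)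
Definition dcorr (R : realType) (n : nat) (corr : correlator R n) (X : seq (ins n)) :
  sps R[i] (ins n) void :=
  fun es os => if os is [::] then corr (X ++ es) else 0.

Definition corr_symmetric (R : realType) (n : nat) (corr : correlator R n) : Prop :=
  forall s t, perm_eq s t -> corr s = corr t.

Definition corr_unstable_vanish (R : realType) (n : nat) (corr : correlator R n) : Prop :=
  forall s, (size s < 3)%N -> corr s = 0.

(* genus zero topological recursion relation, as an identity of formal
   power series in the b's:
   <<O^{(i+1)}_a O^{(j)}_b O^{(k)}_c>> =
     sum_sigma <<O^{(i)}_a O^{(0) sigma}>> <<O^{(0)}_sigma O^{(j)}_b O^{(k)}_c>>
   with O^{(0) sigma} = sum_tau g^{sigma tau} O^{(0)}_tau. *)
Definition genus0_TRR (R : realType) (n : nat) (corr : correlator R n) : Prop :=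
  forall (a b c : 'I_n.+1) (i j k : nat),
    dcorr corr [:: (a, i.+1); (b, j); (c, k)] =
    (fun es os => \sum_(sigma < n.+1) \sum_(tau < n.+1)
       ginv corr sigma tau *
       sps_mul (dcorr corr [:: (a, i); (tau, 0%N)])
               (dcorr corr [:: (sigma, 0%N); (b, j); (c, k)]) es os).

(* L^H = sum_{k,alpha} rho^alpha_k < O^{(k)}_alpha exp(sum lambda^beta_m      *)
(*   O^{(m)}_beta) >_0, expanded: its only nonzero Taylor coefficients are   *)
(* those at one odd variable rho^alpha_k and even variables lambda^{b_i}_{m_i}*)
(* (no d_z-derivatives), equal to < O^{(k)}_alpha O^{(m_1)}_{b_1} .. >_0.    *)
Definition LH (R : realType) (n : nat) (corr : correlator R n) : FPS R n :=
  fun es os =>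
    match os with
    | [:: o] => if (o.2 == 0%N) && all (fun e : fvar n => e.2 == 0%N) es
                then corr (o.1 :: map fst es) else 0
    | _ => 0
    end.

Definition bracketC (R : realType) (n : nat) (corr : correlator R n)
  (L1 L2 : FPS R n) : FPS R n := fun es os =>
  \sum_(a < n.+1) \sum_(b < n.+1)
    ginv corr a b * sps_mul (EL a L1) (dz (EL b L2)) es os.

(* Contour observables.  oint_C J^{(1)}_L only depends on L modulo total     *)
(* d_z-derivatives (integral over the closed contour C of a total            *)
(* derivative vanishes); we identify Obs^{oint_C} with the quotient of the   *)
(* ring of local densities L by d_z-exact ones.     *)
Definition oint_C_zero (R : realType) (n : nat) (L : FPS R n) : Prop :=
  exists Kd : FPS R n, sps_wf Kd /\ L = dz Kd.

(* Maurer-Cartan equation in (Obs^{oint_C}, delta, {-,-}_C):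
   delta oint L + 1/2 {oint L, oint L}_C = oint J_{delta L + 1/2 [L,L]} = 0 *)
Definition MaurerCartan_C (R : realType) (n : nat) (corr : correlator R n)
  (L : FPS R n) : Prop :=
  oint_C_zero (sps_add (deltaS L) (sps_scale (2^-1) (bracketC corr L L))).

From HB Require Import structures.
From mathcomp Require Import all_boot all_algebra complex reals.
From mathcomp Require boolp.
From mathcomp Require Import ring.
Set Implicit Arguments. Unset Strict Implicit. Unset Printing Implicit Defensive.
Import GRing.Theory.
Local Open Scope ring_scope.

(* Only the coefficients of L^H at monomials rho_x lambda_y1 .. lambda_yp
   without d_z are nonzero, so the Maurer-Cartan density
   delta L^H + 1/2 [L^H, L^H] is quadratic in rho and carries exactly one d_z.
   It equals d_z K^H for
     K^H = 1/2 sum_{x,y} rho_x rho_y (<<tO_x O_y>> - <<O_x tO_y>>):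
   comparing Taylor coefficients, the terms where d_z falls on a lambda match
   by the three-point topological recursion, and those where it falls on a rho
   by its two-point consequence
     g^{ab} <<O_x O_a>> <<O_b O_y>> = <<tO_x O_y>> + <<O_x tO_y>>,
   which also uses the vanishing of unstable correlators. A total d_z-derivative
   integrates to zero over the closed contour C. *)

Lemma big_tuple_boolS (K : nmodType) m (F : m.+1.-tuple bool -> K) :
  \sum_(t : m.+1.-tuple bool) F t =
  \sum_(t : m.-tuple bool) (F [tuple of true :: t] + F [tuple of false :: t]).
Proof.
rewrite (reindex (fun p : bool * m.-tuple bool => [tuple of p.1 :: p.2])) /=.
  rewrite -(pair_bigA _ (fun (b : bool) (t : m.-tuple bool) => F [tuple of b :: t])).
  by rewrite big_bool -big_split.
exists (fun t => (thead t, [tuple of behead t])) => [[b t]|t] _ /=.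
  by congr (_, _); apply: val_inj.
by apply: val_inj; case/tupleP: t.
Qed.

Lemma big_tuple_bool0 (K : nmodType) (F : 0.-tuple bool -> K) :
  \sum_(t : 0.-tuple bool) F t = F [tuple].
Proof. by rewrite (big_pred1 [tuple]) // => t; rewrite /= (tuple0 t); apply/esym/eqP. Qed.

Lemma size_rem_at (T : Type) i (s : seq T) :
  (i < size s)%N -> size (rem_at i s) = (size s).-1.
Proof.
move=> i_s; rewrite /rem_at size_cat size_take size_drop i_s.
by case: (size s) i_s => // m; rewrite ltnS => /subnKC ->.
Qed.

Section SplitSums.
Variables (K : comNzRingType) (T : Type).
Implicit Types (f g : seq T -> seq T -> K) (s : seq T).

(* Sums of [f l r] over the 2^|s| order-preserving ways of distributing the
   entries of [s] between [l] and [r]; [split_ssum] weighs each one by the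
   Koszul sign of the shuffle [l ++ r] of [s]. *)
Fixpoint split_sum f s : K :=
  if s is x :: s' then
    split_sum (fun l r => f (x :: l) r) s' + split_sum (fun l r => f l (x :: r)) s'
  else f [::] [::].

Fixpoint split_ssum f s : K :=
  if s is x :: s' then
    split_ssum (fun l r => f (x :: l) r) s'
    + split_ssum (fun l r => (-1) ^+ size l * f l (x :: r)) s'
  else f [::] [::].

Lemma split_sum_cons f x s :
  split_sum f (x :: s) =
  split_sum (fun l r => f (x :: l) r) s + split_sum (fun l r => f l (x :: r)) s.
Proof. by []. Qed.

Lemma split_sumE f s :
  \sum_(a : (size s).-tuple bool) f (mask a s) (mask (map negb a) s) = split_sum f s.
Proof.
elim: s f => [|x s IHs] f; first by rewrite big_tuple_bool0.
by rewrite big_tuple_boolS big_split /= -IHs -IHs.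
Qed.

Lemma split_ssumE f s :
  \sum_(a : (size s).-tuple bool)
     (-1) ^+ inv_count a * f (mask a s) (mask (map negb a) s) = split_ssum f s.
Proof.
elim: s f => [|x s IHs] f; first by rewrite big_tuple_bool0 /= mul1r.
rewrite big_tuple_boolS big_split /= -IHs -IHs; congr (_ + _).
apply: eq_bigr => t _.
by rewrite exprD size_mask ?size_tuple // (mulrC ((-1) ^+ count id t)) -!mulrA.
Qed.

Lemma eq_split_sum f g s : f =2 g -> split_sum f s = split_sum g s.
Proof.
elim: s f g => [|x s IHs] f g fg /=; first exact: fg.
by congr (_ + _); apply: IHs => l r; apply: fg.
Qed.

Lemma split_sum0 s : split_sum (fun _ _ => 0) s = 0.
Proof. by elim: s => [|x s IHs] //=; rewrite IHs addr0. Qed.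

Lemma split_sumB f g s :
  split_sum (fun l r => f l r - g l r) s = split_sum f s - split_sum g s.
Proof.
elim: s f g => [|x s IHs] f g //=.
by rewrite (IHs (fun l r => f (x :: l) r)) (IHs (fun l r => f l (x :: r))) opprD addrACA.
Qed.

Lemma split_sumC f s : split_sum f s = split_sum (fun l r => f r l) s.
Proof.
elim: s f => [|x s IHs] f //=.
by rewrite (IHs (fun l r => f (x :: l) r)) (IHs (fun l r => f l (x :: r))) addrC.
Qed.

Lemma split_ssum_eq0 f s :
  (forall l r, (size l + size r = size s)%N -> f l r = 0) -> split_ssum f s = 0.
Proof.
elim: s f => [|x s IHs] f f0 /=; first exact: f0.
rewrite !IHs ?addr0 // => l r lr_s; first by rewrite f0 ?mulr0 //= addnS lr_s.
by rewrite f0 //= addSn lr_s.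
Qed.

Lemma split_ssum2 f x y :
  split_ssum f [:: x; y] = f [:: x; y] [::] + f [:: x] [:: y] - f [:: y] [:: x] + f [::] [:: x; y].
Proof. by rewrite /= expr0 expr1 !mul1r mulN1r !addrA. Qed.

End SplitSums.

Lemma split_sum_map (K : comNzRingType) (T T' : Type) (phi : T -> T')
    (h : seq T' -> seq T' -> K) s :
  split_sum (fun l r => h (map phi l) (map phi r)) s = split_sum h (map phi s).
Proof.
elim: s h => [|x s IHs] h //=.
by rewrite -(IHs (fun l r => h (phi x :: l) r)) -(IHs (fun l r => h l (phi x :: r))).
Qed.

Lemma sps_mulE (K : comNzRingType) (E O : Type) (F G : sps K E O) es os :
  sps_mul F G es os = split_sum (fun l r => split_ssum (fun l' r' => F l l' * G r r') os) es.
Proof.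
rewrite /sps_mul -split_sumE; apply: eq_bigr => a _.
by rewrite -split_ssumE; apply: eq_bigr => b _; rewrite mulrA.
Qed.

Section SplitSumsPerm.
Variables (K : comNzRingType) (T : eqType).
Implicit Types (f g : seq T -> seq T -> K) (s : seq T).

Definition perm_invariant f :=
  forall l l' r r', perm_eq l l' -> perm_eq r r' -> f l r = f l' r'.

Lemma eq_in_split_sum f g s :
  (forall l r, perm_eq (l ++ r) s -> f l r = g l r) -> split_sum f s = split_sum g s.
Proof.
elim: s f g => [|x s IHs] f g fg /=; first exact: fg.
congr (_ + _); apply: IHs => l r lr_s; apply: fg; first by rewrite perm_cons.
by rewrite -cat1s perm_catCA perm_cons.
Qed.

Lemma split_sum_rem f x s :
  perm_invariant f -> x \in s -> split_sum f s = split_sum f (x :: rem x s).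
Proof.
elim: s f => [|y s IHs] f f_inv //.
have [<-|yx] := eqVneq y x; first by rewrite /= eqxx.
rewrite in_cons eq_sym (negbTE yx) /= (negbTE yx) => xs.
have swap t : perm_eq [:: y, x & t] [:: x, y & t].
  by rewrite (perm_catCA [:: y] [:: x] t).
have f_invl z : perm_invariant (fun l r => f (z :: l) r).
  by move=> l l' r r' ll' rr'; apply: f_inv; rewrite ?perm_cons.
have f_invr z : perm_invariant (fun l r => f l (z :: r)).
  by move=> l l' r r' ll' rr'; apply: f_inv; rewrite ?perm_cons.
have swapl : split_sum (fun l r => f [:: y, x & l] r) (rem x s)
           = split_sum (fun l r => f [:: x, y & l] r) (rem x s).
  by apply: eq_split_sum => l r; apply: f_inv (swap l) (perm_refl r).
have swapr : split_sum (fun l r => f l [:: y, x & r]) (rem x s)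
           = split_sum (fun l r => f l [:: x, y & r]) (rem x s).
  by apply: eq_split_sum => l r; apply: f_inv (perm_refl l) (swap r).
rewrite (IHs _ (f_invl y) xs) (IHs _ (f_invr y) xs) /= swapl swapr.
by rewrite addrACA.
Qed.

Lemma perm_split_sum f s s' :
  perm_invariant f -> perm_eq s s' -> split_sum f s = split_sum f s'.
Proof.
elim: s f s' => [|x s IHs] f s' f_inv ss'.
  by move: ss'; rewrite perm_sym => /perm_small_eq ->.
have xs' : x \in s' by rewrite -(perm_mem ss') mem_head.
rewrite (split_sum_rem f_inv xs') /=.
have {}ss' : perm_eq s (rem x s').
  by rewrite -(perm_cons x); apply: perm_trans ss' (perm_to_rem xs').
congr (_ + _); apply: IHs ss' => l l' r r' ll' rr'.
  by apply: f_inv; rewrite ?perm_cons.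
by apply: f_inv; rewrite ?perm_cons.
Qed.

End SplitSumsPerm.

Section DzDegree.
Variable n : nat.
Implicit Types s t l r : seq (fvar n).

Definition dzdeg s : nat := sumn (map snd s).

Definition strip_dz s : seq (fvar n) := map (fun e => (e.1, 0%N)) s.

Lemma dzdeg_cons x s : dzdeg (x :: s) = (x.2 + dzdeg s)%N.
Proof. by []. Qed.

Lemma perm_dzdeg s t : perm_eq s t -> dzdeg s = dzdeg t.
Proof. by move=> st; apply/perm_sumn/perm_map. Qed.

Lemma dzdeg_split l r s : perm_eq (l ++ r) s -> (dzdeg l + dzdeg r)%N = dzdeg s.
Proof. by move/perm_dzdeg <-; rewrite /dzdeg map_cat sumn_cat. Qed.

Lemma dzdeg_eq0 s : (dzdeg s == 0%N) = all (fun e : fvar n => e.2 == 0%N) s.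
Proof. by elim: s => [|x s IHs] //=; rewrite -IHs addn_eq0. Qed.

Lemma dzdeg_strip s : dzdeg (strip_dz s) = 0%N.
Proof. by elim: s. Qed.

Lemma map_fst_strip s : map fst (strip_dz s) = map fst s.
Proof. by rewrite -map_comp. Qed.

Lemma strip_dz_id s : dzdeg s = 0%N -> strip_dz s = s.
Proof.
elim: s => [|[v m] s IHs] //; rewrite dzdeg_cons /= => /eqP.
by rewrite addn_eq0 => /andP[/eqP -> /eqP /IHs ->].
Qed.

Lemma unshifts_dzdeg0 s : dzdeg s = 0%N -> unshifts s = [::].
Proof.
elim: s => [|[v m] s IHs] //; rewrite dzdeg_cons /= => /eqP.
by rewrite addn_eq0 => /andP[/eqP -> /eqP /IHs ->].
Qed.

Lemma unshifts_dzdeg1 s : dzdeg s = 1%N -> unshifts s = [:: strip_dz s].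
Proof.
elim: s => [|[v [|[|m]]] s IHs] //=; first by move/IHs ->.
by case=> s0; rewrite unshifts_dzdeg0 ?strip_dz_id.
Qed.

Lemma dzdeg_unshifts s t : t \in unshifts s -> (dzdeg t).+1 = dzdeg s.
Proof.
elim: s t => [|[v m] s IHs] t //=; rewrite mem_cat => /orP[|/mapP[t' t's ->]].
  by case: m => [|m] //=; rewrite inE => /eqP ->.
by rewrite !dzdeg_cons -(IHs _ t's) addnS.
Qed.

Lemma big_unshifts (K : nmodType) (h : seq (fvar n) -> K) s :
  (forall t, dzdeg t != 0%N -> h t = 0) ->
  \sum_(t <- unshifts s) h t = if dzdeg s == 1%N then h (strip_dz s) else 0.
Proof.
move=> h0; have [s0|_] := eqVneq (dzdeg s) 0%N.
  by rewrite unshifts_dzdeg0 // big_nil s0.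
have [s1|s_neq1] := eqVneq (dzdeg s) 1%N.
  by rewrite unshifts_dzdeg1 // big_seq1.
rewrite big1_seq // => t /andP[_ /dzdeg_unshifts ts]; apply: h0.
by apply: contraNneq s_neq1 => t0; rewrite -ts t0.
Qed.

Lemma dz_underived (R : realType) (F : FPS R n) es os :
  (forall es os, (dzdeg es + dzdeg os != 0)%N -> F es os = 0) ->
  dz F es os = (if dzdeg es == 1%N then F (strip_dz es) os else 0)
             + (if dzdeg os == 1%N then F es (strip_dz os) else 0).
Proof.
move=> F0; rewrite /dz !big_unshifts // => t t0; apply: F0.
  by rewrite addn_eq0 negb_and t0 orbT.
by rewrite addn_eq0 negb_and t0.
Qed.

End DzDegree.

Definition tshift (n : nat) (x : ins n) : ins n := (x.1, x.2.+1).

Section GenusZero.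
Variables (R : realType) (n : nat) (corr : correlator R n).
Hypothesis corr_sym : corr_symmetric corr.
Local Notation K := R[i].
Local Notation LH := (LH corr).
Implicit Types (es os : seq (fvar n)) (a b : 'I_n.+1).

Lemma corrC2 x y s : corr (x :: y :: s) = corr (y :: x :: s).
Proof. by apply: corr_sym; rewrite (perm_catCA [:: x] [:: y] s). Qed.

Lemma corr_perm2 x y s t : perm_eq s t -> corr (x :: y :: s) = corr (x :: y :: t).
Proof. by move=> st; apply: corr_sym; rewrite !perm_cons. Qed.

Lemma ginvC a b : ginv corr a b = ginv corr b a.
Proof.
have gmetT : (gmet corr)^T = gmet corr by apply/matrixP => i j; rewrite !mxE corrC2.
by rewrite /ginv -[in RHS]gmetT -trmx_inv mxE.
Qed.

Lemma LH_single es (o : fvar n) :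
  LH es [:: o] = if (dzdeg es + o.2 == 0)%N then corr (o.1 :: map fst es) else 0.
Proof. by rewrite /LH -dzdeg_eq0 addn_eq0 andbC. Qed.

Lemma LH_size es os : size os != 1%N -> LH es os = 0.
Proof. by case: os => [|o [|o' os]]. Qed.

Definition dLH a : FPS R n := sps_dE ((a, 0%N), 0%N) LH.

Lemma dLH_single a l (u : ins n) p :
  dLH a l [:: (u, p)] =
  if (dzdeg l + p == 0)%N then corr (u :: (a, 0%N) :: map fst l) else 0.
Proof. by rewrite /dLH /sps_dE LH_single dzdeg_cons. Qed.

Lemma dLH_size a l os : size os != 1%N -> dLH a l os = 0.
Proof. exact: LH_size. Qed.

Lemma dLH_underived a l os : (dzdeg l + dzdeg os != 0)%N -> dLH a l os = 0.
Proof.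
case: os => [|[u p] [|o' os]] // l_os; rewrite dLH_single.
by rewrite dzdeg_cons addn0 in l_os; rewrite (negbTE l_os).
Qed.

Lemma dz_dLH_single b r (v : ins n) q :
  dz (dLH b) r [:: (v, q)] =
  if (dzdeg r + q == 1)%N then corr (v :: (b, 0%N) :: map fst r) else 0.
Proof.
rewrite dz_underived; last exact: dLH_underived.
change (strip_dz [:: (v, q)]) with [:: (v, 0%N)].
rewrite !dLH_single dzdeg_strip map_fst_strip dzdeg_cons addn0 add0n.
by case: (dzdeg r) => [|[|w]]; case: q => [|[|q]]; rewrite /= ?addr0 ?add0r.
Qed.

Lemma dz_dLH_size b r os : size os != 1%N -> dz (dLH b) r os = 0.
Proof.
move=> os_neq1; rewrite dz_underived; last exact: dLH_underived.
by rewrite !dLH_size ?size_map // !if_same addr0.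
Qed.

Lemma EL_LH a : EL a LH = dLH a.
Proof.
have dz0 : @dz R n (fun _ _ => 0) = (fun _ _ => 0).
  by apply: boolp.funext => es; apply: boolp.funext => os; rewrite /dz !big1 ?addr0.
have iter_dz0 m : iter m (@dz R n) (fun _ _ => 0) = (fun _ _ => 0).
  by elim: m => [|m /= ->].
apply: boolp.funext => es; apply: boolp.funext => os.
rewrite /EL big_ord_recl /= mul1r big1 ?addr0 // => k _.
have -> : sps_dE ((a, 0%N), (bump 0 k)) LH = (fun _ _ => 0).
  apply: boolp.funext => l; apply: boolp.funext => l'.
  by rewrite /sps_dE /LH; case: l' => [|o [|o' l']] //=; rewrite andbF.
by rewrite iter_dz0 dz0 mulr0.
Qed.

Lemma dLH_mul_dz_dLH a b l r (u v : ins n) p q :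
  dLH a l [:: (u, p)] * dz (dLH b) r [:: (v, q)] =
  if (dzdeg l + p == 0)%N && (dzdeg r + q == 1)%N
  then corr (u :: (a, 0%N) :: map fst l) * corr (v :: (b, 0%N) :: map fst r) else 0.
Proof.
rewrite dLH_single dz_dLH_single.
by case: ifP => _; case: ifP => _; rewrite ?mul0r ?mulr0.
Qed.

Hypothesis corr_vanish : corr_unstable_vanish corr.
Hypothesis corr_TRR : genus0_TRR corr.

Lemma TRR_coef (u v x : ins n) s :
  \sum_a \sum_b ginv corr a b *
    split_sum (fun l r => corr (u :: (a, 0%N) :: l) * corr (v :: (b, 0%N) :: x :: r)) s
  = corr (tshift u :: v :: x :: s).
Proof.
case: u => [ua ui]; case: v => [vb vj]; case: x => [xc xk].
have := congr1 (fun F => F s [::]) (corr_TRR ua vb xc ui vj xk).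
rewrite /dcorr /= => ->.
rewrite exchange_big /=; apply: eq_bigr => b _; apply: eq_bigr => a _.
rewrite sps_mulE ginvC; congr (_ * _).
by apply: eq_split_sum => l r /=; congr (_ * _); apply: corrC2.
Qed.

(* Send the first insertion [x] of [s] to one side or the other: each half
   is an instance of the three-point relation. *)
Lemma TRR_two_point (u v : ins n) s :
  \sum_a \sum_b ginv corr a b *
    split_sum (fun l r => corr (u :: (a, 0%N) :: l) * corr (v :: (b, 0%N) :: r)) s
  = corr (tshift u :: v :: s) + corr (u :: tshift v :: s).
Proof.
case: s => [|x s].
  rewrite !corr_vanish // addr0 big1 // => a _; rewrite big1 // => b _ /=.
  by rewrite (corr_vanish (s := [:: _; _])) // mul0r mulr0.
under eq_bigr => a _ do under eq_bigr => b _ do rewrite split_sum_cons mulrDr.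
under eq_bigr => a _ do rewrite big_split /=.
rewrite big_split /= TRR_coef addrC; congr (_ + _).
rewrite exchange_big /= -corrC2 -TRR_coef; apply: eq_bigr => b _; apply: eq_bigr => a _.
rewrite ginvC split_sumC; congr (_ * _).
by apply: eq_split_sum => l r; apply: mulrC.
Qed.

Definition half_bracket es (x y : fvar n) : K :=
  \sum_a \sum_b ginv corr a b *
    split_sum (fun l r => dLH a l [:: x] * dz (dLH b) r [:: y]) es.

Lemma half_bracketE es (u v : ins n) p q :
  half_bracket es (u, p) (v, q) =
  \sum_a \sum_b ginv corr a b * split_sum (fun l r =>
    if (dzdeg l + p == 0)%N && (dzdeg r + q == 1)%N
    then corr (u :: (a, 0%N) :: map fst l) * corr (v :: (b, 0%N) :: map fst r)
    else 0) es.
Proof.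
apply: eq_bigr => a _; apply: eq_bigr => b _; congr (_ * _).
by apply: eq_split_sum => l r; apply: dLH_mul_dz_dLH.
Qed.

Lemma half_bracket_eq0 es (u v : ins n) p q :
  (p != 0%N) || (dzdeg es + (p + q) != 1)%N -> half_bracket es (u, p) (v, q) = 0.
Proof.
move=> pq; rewrite half_bracketE big1 // => a _; rewrite big1 // => b _.
rewrite (eq_in_split_sum (g := fun _ _ => 0)) ?split_sum0 ?mulr0 // => l r.
move=> /dzdeg_split lr_es; case: ifP => // /andP[/eqP l_p /eqP r_q].
move: l_p => /eqP; rewrite addn_eq0 => /andP[/eqP l0 /eqP p0].
by rewrite -lr_es p0 l0 !add0n r_q in pq.
Qed.

Lemma half_bracket_dzdeg0 es (u v : ins n) :
  dzdeg es = 0%N ->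
  half_bracket es (u, 0%N) (v, 1%N) =
  corr (tshift u :: v :: map fst es) + corr (u :: tshift v :: map fst es).
Proof.
move=> es0; rewrite half_bracketE -TRR_two_point.
apply: eq_bigr => a _; apply: eq_bigr => b _; congr (_ * _).
rewrite -split_sum_map; apply: eq_in_split_sum => l r /dzdeg_split.
by rewrite es0 => /eqP; rewrite addn_eq0 => /andP[/eqP -> /eqP ->].
Qed.

Lemma half_bracket_dzdeg1 es (u v : ins n) :
  dzdeg es = 1%N ->
  half_bracket es (u, 0%N) (v, 0%N) = corr (tshift u :: v :: map fst es).
Proof.
move=> es1; have /allPn[x x_es x_neq0] : ~~ all (fun e : fvar n => e.2 == 0%N) es.
  by rewrite -dzdeg_eq0 es1.
have es_x := perm_to_rem x_es; set es' := rem x es in es_x.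
have [x1 es'0] : x.2 = 1%N /\ dzdeg es' = 0%N.
  move: (perm_dzdeg es_x) x_neq0; rewrite es1 dzdeg_cons.
  by case: (x.2) => [|[|?]] //; case: (dzdeg es').
rewrite half_bracketE (corr_perm2 _ _ (perm_map fst es_x)) -TRR_coef.
apply: eq_bigr => a _; apply: eq_bigr => b _; congr (_ * _).
set f := fun l r => if _ then _ else _.
have f_inv : perm_invariant f.
  move=> l l' r r' ll' rr'; rewrite /f (perm_dzdeg ll') (perm_dzdeg rr').
  by rewrite (corr_perm2 _ _ (perm_map fst ll')) (corr_perm2 _ _ (perm_map fst rr')).
rewrite (perm_split_sum f_inv es_x) split_sum_cons -split_sum_map.
rewrite (eq_split_sum _ (g := fun _ _ => 0)) ?split_sum0 ?add0r; last first.
  by move=> l r; rewrite /f dzdeg_cons x1.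
apply: eq_in_split_sum => l r /dzdeg_split.
rewrite es'0 => /eqP; rewrite addn_eq0 => /andP[/eqP l0 /eqP r0].
by rewrite /f dzdeg_cons x1 l0 r0.
Qed.

Lemma bracket_LH_two es x y :
  bracketC corr LH LH es [:: x; y] = half_bracket es x y - half_bracket es y x.
Proof.
rewrite /bracketC /half_bracket -sumrB; apply: eq_bigr => a _.
rewrite -sumrB; apply: eq_bigr => b _.
rewrite -mulrBr !EL_LH sps_mulE -split_sumB; congr (_ * _).
apply: eq_split_sum => l r; rewrite split_ssum2.
rewrite (dLH_size _ _ (os := [:: x; y])) // (dLH_size _ _ (os := [::])) //.
by rewrite !mul0r add0r addr0.
Qed.

Lemma bracket_LH_size es os : size os != 2%N -> bracketC corr LH LH es os = 0.
Proof.
move=> os_neq2; rewrite /bracketC big1 // => a _; rewrite big1 // => b _.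
rewrite !EL_LH sps_mulE (eq_split_sum _ (g := fun _ _ => 0)) ?split_sum0 ?mulr0 //.
move=> l r; apply: split_ssum_eq0 => l' r' lr_os.
have [l'1|l'_neq1] := eqVneq (size l') 1%N; last by rewrite dLH_size ?mul0r.
rewrite dz_dLH_size ?mulr0 //; apply: contra_neq os_neq2 => r'1.
by rewrite -lr_os l'1 r'1.
Qed.

Lemma deltaS_LH_size es os : size os != 2%N -> deltaS LH es os = 0.
Proof.
move=> os_neq2; rewrite /deltaS big1 // => i _.
case: (nth _ os i) => [[a k] [|m]]; first by rewrite mulr0.
rewrite LH_size ?mulr0 // size_rem_at //.
by move: os_neq2; case: (size os) => [|[|[|?]]].
Qed.

Lemma deltaS_LH_two es (u v : ins n) p q :
  deltaS LH es [:: (u, p); (v, q)] =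
  if (dzdeg es + (p + q) == 1)%N
  then (if p == 1%N then corr (v :: tshift u :: map fst es) else 0)
     - (if q == 1%N then corr (u :: tshift v :: map fst es) else 0)
  else 0.
Proof.
case: u => [c j]; case: v => [d k].
rewrite /deltaS !big_ord_recl big_ord0 addr0 /= expr0 expr1 mul1r mulN1r.
case: p => [|[|p]]; case: q => [|[|q]];
  rewrite /= -?dzdeg_eq0 ?addn0 ?addn1 ?addnS ?eqSS /tshift /=;
  by case: (dzdeg es == 0%N); rewrite ?subr0 ?subrr ?sub0r ?if_same.
Qed.

Definition KH : FPS R n := fun es os =>
  if os is [:: x; y] then
    if (dzdeg es + x.2 + y.2 == 0)%N
    then 2^-1 * (corr (tshift x.1 :: y.1 :: map fst es) - corr (x.1 :: tshift y.1 :: map fst es))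
    else 0
  else 0.

Lemma KH_size es os : size os != 2%N -> KH es os = 0.
Proof. by case: os => [|x [|y [|z os]]]. Qed.

Lemma KH_underived es os : (dzdeg es + dzdeg os != 0)%N -> KH es os = 0.
Proof.
case: os => [|x [|y [|z os]]] //=; rewrite /dzdeg /= addn0 addnA.
by move/negbTE ->.
Qed.

Lemma dz_KH_size es os : size os != 2%N -> dz KH es os = 0.
Proof.
move=> os_neq2; rewrite dz_underived; last exact: KH_underived.
by rewrite !KH_size ?size_map // !if_same addr0.
Qed.

Lemma dz_KH_two es (u v : ins n) p q :
  dz KH es [:: (u, p); (v, q)] =
  if (dzdeg es + (p + q) == 1)%N
  then 2^-1 * (corr (tshift u :: v :: map fst es) - corr (u :: tshift v :: map fst es))
  else 0.
Proof.
rewrite dz_underived; last exact: KH_underived.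
change (strip_dz [:: (u, p); (v, q)]) with [:: (u, 0%N); (v, 0%N)].
rewrite /KH /= dzdeg_strip map_fst_strip /dzdeg /= addn0.
by case: (sumn _) => [|[|w]]; case: p => [|[|p]]; case: q => [|[|q]];
  rewrite /= ?addr0 ?add0r.
Qed.

Lemma KH_wf : sps_wf KH.
Proof.
split=> [es es' os es_es'|es pre x y post].
  case: os => [|x [|y [|z os]]] //=.
  by rewrite (perm_dzdeg es_es') !(corr_perm2 _ _ (perm_map fst es_es')).
case: pre => [|p1 [|p2 [|p3 pre]]] /=; try by rewrite oppr0.
case: post => [|p post] /=; last by rewrite oppr0.
rewrite -!addnA [(y.2 + _)%N]addnC.
case: ifP => _; last by rewrite oppr0.
by rewrite (corrC2 (tshift y.1)) (corrC2 y.1) -mulrN opprB.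
Qed.

Lemma MaurerCartan_coef es os :
  deltaS LH es os + 2^-1 * bracketC corr LH LH es os = dz KH es os.
Proof.
have [os2|os_neq2] := eqVneq (size os) 2%N; last first.
  by rewrite deltaS_LH_size // bracket_LH_size // dz_KH_size // mulr0 addr0.
case: os os2 => [|[u p] [|[v q] []]] // _.
rewrite bracket_LH_two deltaS_LH_two dz_KH_two.
have [deg1|deg_neq1] := eqVneq (dzdeg es + (p + q))%N 1%N; last first.
  by rewrite !half_bracket_eq0 ?(addnC q) ?deg_neq1 ?orbT // subr0 mulr0 addr0.
move: deg1; case: p => [|[|p]]; case: q => [|[|q]]; rewrite ?addn0 ?addn1 ?addnS //= => deg.
- by rewrite !half_bracket_dzdeg1 // (corrC2 (tshift v)) subrr add0r.
- case: deg => deg.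
  by rewrite half_bracket_dzdeg0 // half_bracket_eq0 //; field.
- case: deg => deg.
  rewrite half_bracket_eq0 // half_bracket_dzdeg0 // (corrC2 (tshift v)) (corrC2 v).
  by field.
Qed.

End GenusZero.

Theorem mainTheorem7 (R : realType) (n : nat) (corr : correlator R n)
  (Hsym : corr_symmetric corr)
  (Hvan : corr_unstable_vanish corr)
  (Hnondeg : gmet corr \in unitmx)
  (HTRR : genus0_TRR corr) :
  MaurerCartan_C corr (LH corr).
Proof.
exists (KH corr); split; first exact: KH_wf.
apply: boolp.funext => es; apply: boolp.funext => os.
exact: MaurerCartan_coef.
Qed.
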